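(* Let $J=\{q_1,\dots,q_n\}$ be a finite set of odd primes with $3\notin J$. For each $i$ fix $m_i\in\mathbb{N}$ and $e_i\in\{0,1\}$. Then at most $$\sum_{i=1}^n\frac{\phi(q_i^{m_i})}{2}+3$$ of the numbers in the set $$\{H_1\}\cup\{H_{a/(2^{e_i}q_i^{m_i})}:\ 1\le i\le n,\ 1\le a\le 2^{e_i}q_i^{m_i}-1\}$$ are linearly independent over $\overline{\mathbb{Q}}$.
   Context: $\phi$ is Euler's totient function and $\overline{\mathbb{Q}}$ is the field of algebraic numbers. For a complex number $r$ which is not a negative integer, $H_r=r\sum_{k=1}^{\infty}\frac{1}{k(r+k)}$; for integers $Q>1$ and $1\le a\le Q$ it satisfies Gauss's formula $H_{a/Q}=\frac Qa-\log(2Q)-\frac{\pi}{2}\cot(\pi a/Q)+2\sum_{k=1}^{\lfloor (Q-1)/2\rfloor}\cos(2\pi k a/Q)\log\sin(\pi k/Q)$. *)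

From Stdlib Require Import Reals Lra Lia ZArith Arith List Znumtheory ClassicalEpsilon.
Open Scope R_scope.

Definition totient (n : nat) : nat :=
  length (filter (fun k => Nat.eqb (Nat.gcd k n) 1) (seq 1 n)).

(* H_r = r * sum_{k>=1} 1/(k (r+k)); the sum is the limit chosen by epsilon
   (it exists for all r > 0, the only arguments used below). *)
Definition harm_series (r : R) : R :=
  epsilon (inhabits 0)
    (fun l => infinite_sum (fun k : nat => / (INR (S k) * (r + INR (S k)))) l).

Definition H (r : R) : R := r * harm_series r.

Fixpoint zpoly_eval (p : list Z) (x : R) : R :=
  match p with
  | nil => 0
  | c :: p' => IZR c + x * zpoly_eval p' x
  end.

Definition is_algebraic (x : R) : Prop :=
  exists p : list Z, Exists (fun c => c <> 0%Z) p /\ zpoly_eval p x = 0.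

Fixpoint lin_comb (cs xs : list R) : R :=
  match cs, xs with
  | c :: cs', x :: xs' => c * x + lin_comb cs' xs'
  | _, _ => 0
  end.

Definition alg_lin_indep (xs : list R) : Prop :=
  forall cs : list R,
    length cs = length xs ->
    Forall is_algebraic cs ->
    lin_comb cs xs = 0 ->
    Forall (fun c => c = 0) cs.

Fixpoint sumR_upto (n : nat) (f : nat -> R) : R :=
  match n with
  | O => 0
  | S n' => sumR_upto n' f + f n'
  end.

From Stdlib Require Import Reals ZArith Arith List Znumtheory Lra Lia Bool.
From Stdlib Require Import Classical ClassicalEpsilon.
From mathcomp Require all_boot all_algebra Rstruct.
Open Scope R_scope.

(* We exhibit an explicit list of
   3 + sum_i phi(q_i^m_i)/2 real numbers, namely 1, pi, ln 2 and, for each i,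
   the symmetric sums H(a/Q) + H(1 - a/Q) over the units a < Q/2, whose span
   over the algebraic numbers contains every number of the theorem.  A
   family that is linearly independent over the algebraic numbers and lies
   in the span of a list Y has at most length Y elements (Gaussian
   elimination over the field of algebraic reals), which gives the bound.

   The membership proofs use two functional equations of H, proved here
   from the series definition rather than from Gauss's formula:
   - the multiplication formula sum_(j<N) H((s+j)/N) = N H(s) + N c - N ln N,
     where c = sum_(k<N-1) 1/(k+1+s) is algebraic for algebraic s,
     obtained by regrouping partial sums;
   - the reflection formula H(x) - H(1-x) = 1/x - 1/(1-x) - pi cot(pi x),
     obtained by a maximum principle for functions satisfying the
     duplication identity f(x/2) + f((x+1)/2) = 2 f(x).
   With cot(pi a/Q) algebraic, reflection handles units modulo q^m, the
   multiplication formula with N = q descends to lower powers of q (and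
   yields ln q), and the duplication formula handles denominators 2 q^m. *)

Lemma cos_PI_mul_nat (k : nat) : cos (PI * INR k) = (-1) ^ k.
Proof.
  induction k as [|k IH].
  - simpl. rewrite Rmult_0_r. apply cos_0.
  - rewrite S_INR, Rmult_plus_distr_l, Rmult_1_r, neg_cos, IH. simpl. ring.
Qed.

Lemma cos_three_term a x : cos (a + x) = 2 * cos x * cos a - cos (a - x).
Proof. rewrite cos_plus, cos_minus. ring. Qed.

Module AlgebraicReals.
Import all_boot all_algebra Rstruct.
Import GRing.Theory.
Local Open Scope ring_scope.

Definition alg (x : R) : Prop := algebraicOver (@ratr R) x.

Lemma alg_add x y : alg x -> alg y -> alg (Rplus x y).
Proof. exact: algebraic_add. Qed.
Lemma alg_mul x y : alg x -> alg y -> alg (Rmult x y).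
Proof. exact: algebraic_mul. Qed.
Lemma alg_opp x : alg x -> alg (Ropp x).
Proof. exact: algebraic_opp. Qed.
Lemma alg_inv x : alg x -> alg (Rinv x).
Proof. exact: algebraic_inv. Qed.
Lemma alg_INR n : alg (INR n).
Proof. rewrite INRE -ratr_nat; exact: algebraic_id. Qed.

Fixpoint cheb_pair (k : nat) : {poly rat} * {poly rat} :=
  if k is k'.+1 then let (a, b) := cheb_pair k' in (b, 2%:R *: 'X * b - a)
  else (1, 'X).
Definition cheb (k : nat) : {poly rat} := (cheb_pair k).1.

Lemma cheb_pairE k : cheb_pair k = (cheb k, cheb k.+1).
Proof. by elim: k => [|k IH] //=; rewrite /cheb /= IH. Qed.

Lemma cheb_rec k : cheb k.+2 = 2%:R *: 'X * cheb k.+1 - cheb k.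
Proof. by rewrite {1}/cheb /= cheb_pairE. Qed.

Lemma cheb_cos k x :
  (map_poly (@ratr R) (cheb k)).[cos x] = cos (INR k * x)
  /\ (map_poly (@ratr R) (cheb k.+1)).[cos x] = cos (INR k.+1 * x).
Proof.
elim: k => [|k [IH1 IH2]].
  rewrite /cheb /= map_polyC /= hornerC rmorph1 map_polyX hornerX.
  by rewrite Rmult_0_l cos_0 Rmult_1_l.
split => //.
have -> : Rmult (INR k.+2) x = Rplus (Rmult (INR k.+1) x) x.
  by rewrite (S_INR k.+1); ring.
have Ek : Rmult (INR k) x = Rminus (Rmult (INR k.+1) x) x.
  by rewrite (S_INR k); ring.
rewrite cheb_rec rmorphB rmorphM /= map_polyZ map_polyX.
rewrite !hornerE IH1 IH2 rmorph_nat Ek.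
by rewrite cos_three_term.
Qed.

Lemma size_cheb k : size (cheb k) = k.+1.
Proof.
suff H : size (cheb k) = k.+1 /\ size (cheb k.+1) = k.+2 by case: H.
elim: k => [|k [H1 H2]].
  by rewrite /cheb /= size_polyC oner_neq0 size_polyX.
have nz : cheb k.+1 != 0 by rewrite -size_poly_eq0 H2.
have sizeM : size (2%:R *: 'X * cheb k.+1) = k.+3.
  by rewrite -scalerAl size_scale ?pnatr_eq0 // mulrC size_mulX // H2.
by split => //; rewrite cheb_rec size_polyDl ?size_polyN sizeM ?H1.
Qed.

(* cos (k pi / N) is a root of T_N - (-1)^k, a nonzero rational polynomial. *)
Lemma alg_cos_pi_frac k N : lt 0 N -> alg (cos (Rdiv (Rmult PI (INR k)) (INR N))).
Proof.
move=> /ltP N_gt0.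
exists (cheb N - ((-1) ^+ k)%:P).
  rewrite subr_eq0; apply/negP => /eqP E.
  have := size_cheb N; rewrite E size_polyC.
  by case: (_ != 0) => // -[N0]; rewrite -N0 in N_gt0.
apply/rootP.
rewrite rmorphB /= map_polyC /= hornerD hornerN hornerC.
have [-> _] := cheb_cos N (Rdiv (Rmult PI (INR k)) (INR N)).
have -> : Rmult (INR N) (Rdiv (Rmult PI (INR k)) (INR N)) = Rmult PI (INR k).
  by field; apply: not_0_INR => N0; rewrite N0 in N_gt0.
by rewrite cos_PI_mul_nat rmorphXn rmorphN rmorph1 -RpowE subrr.
Qed.

(* Translation to the integer-coefficient definition: clear the
   denominators of the rational polynomial. *)
Definition int_to_Z (z : int) : Z :=
  match z with Posz n => Z.of_nat n | Negz n => Z.opp (Z.of_nat n.+1) end.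

Lemma IZR_int_to_Z z : IZR (int_to_Z z) = (z%:~R : R).
Proof.
case: z => n; rewrite /int_to_Z; first by rewrite -INR_IZR_INZ INRE.
by rewrite opp_IZR -INR_IZR_INZ INRE NegzE mulrNz.
Qed.

Lemma zpoly_eval_int (s : seq int) (x : R) :
  zpoly_eval (map int_to_Z s) x = horner_rec (map (fun c : int => (c%:~R : R)) s) x.
Proof.
elim: s => [|c s IH] //=.
by rewrite IH IZR_int_to_Z -RplusE -RmultE Rplus_comm Rmult_comm.
Qed.

Lemma Exists_int_to_Z_nz (s : seq int) : ~~ all (fun c => c == 0) s ->
  Exists (fun c : Z => c <> Z0) (map int_to_Z s).
Proof.
elim: s => [|c s IH] //= /nandP [/eqP c_nz|s_nz]; last exact/Exists_cons_tl/IH.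
apply: Exists_cons_hd => E; apply: c_nz.
by case: c E => n /= E; [rewrite (Nat2Z.inj n 0 E) | lia].
Qed.

Lemma alg_is_algebraic x : alg x -> is_algebraic x.
Proof.
move=> [p p_nz /rootP px].
have [q [a a_nz Ep]] := rat_poly_scale p.
have q_nz : q != 0 by apply: contraNneq p_nz => q0; rewrite Ep q0 rmorph0 scaler0.
exists (map int_to_Z q); split.
  apply: Exists_int_to_Z_nz; apply/negP => /allP all0.
  have : lead_coef q \in (q : seq int).
    by rewrite lead_coefE; apply: mem_nth; rewrite prednK // size_poly_gt0.
  by move/all0/eqP/eqP; rewrite lead_coef_eq0 (negPf q_nz).
rewrite zpoly_eval_int.
suff : (map_poly (fun c : int => (c%:~R : R)) q).[x] = 0.
  by rewrite map_polyE horner_Poly.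
move: px; rewrite Ep.
have -> : map_poly (@ratr R) (a%:~R^-1 *: map_poly (intr : int -> rat) q)
   = (ratr (a%:~R^-1)) *: map_poly (fun c : int => (c%:~R : R)) q.
  apply/polyP => i; rewrite coefZ !coef_map_id0 ?rmorph0 // coefZ rmorphM.
  by rewrite coef_map_id0 ?rmorph0 //= ratr_int.
rewrite hornerZ => /eqP; rewrite mulf_eq0 => /orP [|/eqP //].
by rewrite fmorph_eq0 invr_eq0 intr_eq0 (negPf a_nz).
Qed.

End AlgebraicReals.

Import AlgebraicReals.

Lemma alg_sub x y : alg x -> alg y -> alg (x - y).
Proof. intros; apply alg_add; auto; apply alg_opp; auto. Qed.

Lemma alg_div x y : alg x -> alg y -> alg (x / y).
Proof. intros; apply alg_mul; auto; apply alg_inv; auto. Qed.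

Lemma alg_IZR z : alg (IZR z).
Proof.
  assert (Hpos : forall p, alg (IZR (Z.pos p))).
  { intros p. rewrite <- positive_nat_Z, <- INR_IZR_INZ. apply alg_INR. }
  destruct z as [|p|p].
  - exact (alg_INR 0).
  - apply Hpos.
  - apply (alg_opp _ (Hpos p)).
Qed.

Lemma alg_nat_frac b N : alg (INR b / INR N).
Proof. apply alg_div; apply alg_INR. Qed.

(* sin (k pi / N) = cos ((2k - N) pi / 2N) is algebraic. *)
Lemma alg_sin_pi_frac k N : (0 < N)%nat -> alg (sin (PI * INR k / INR N)).
Proof.
  intros HN. assert (HNr : 0 < INR N) by (apply lt_0_INR; auto).
  replace (sin (PI * INR k / INR N)) with (cos (PI * INR k / INR N - PI / 2))
    by (rewrite cos_minus, cos_PI2, sin_PI2; ring).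
  destruct (le_lt_dec N (2 * k)) as [Hle|Hlt].
  - replace (PI * INR k / INR N - PI / 2) with (PI * INR (2 * k - N) / INR (2 * N))
      by (rewrite minus_INR, !mult_INR by lia; simpl; field; lra).
    apply alg_cos_pi_frac; lia.
  - replace (PI * INR k / INR N - PI / 2) with (- (PI * INR (N - 2 * k) / INR (2 * N)))
      by (rewrite minus_INR, !mult_INR by lia; simpl; field; lra).
    rewrite cos_neg. apply alg_cos_pi_frac; lia.
Qed.

Definition cot (t : R) : R := cos t / sin t.

Lemma alg_cot_pi_frac b N : (0 < N)%nat -> alg (cot (PI * (INR b / INR N))).
Proof.
  intros HN. unfold cot. replace (PI * (INR b / INR N)) with (PI * INR b / INR N) by (unfold Rdiv; ring).
  apply alg_div; [apply alg_cos_pi_frac | apply alg_sin_pi_frac]; auto.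
Qed.

Lemma sum_ext n f g : (forall i, (i < n)%nat -> f i = g i) -> sumR_upto n f = sumR_upto n g.
Proof.
  induction n; intros E; simpl; auto.
  rewrite IHn by (intros; apply E; lia). rewrite E by lia. reflexivity.
Qed.

Lemma sum_S n f : sumR_upto (S n) f = sumR_upto n f + f n.
Proof. reflexivity. Qed.

Lemma sum_plus n f g : sumR_upto n (fun i => f i + g i) = sumR_upto n f + sumR_upto n g.
Proof. induction n; simpl; [ring|]. rewrite IHn; ring. Qed.

Lemma sum_minus n f g : sumR_upto n (fun i => f i - g i) = sumR_upto n f - sumR_upto n g.
Proof. induction n; simpl; [ring|]. rewrite IHn; ring. Qed.

Lemma sum_scal n c f : sumR_upto n (fun i => c * f i) = c * sumR_upto n f.
Proof. induction n; simpl; [ring|]. rewrite IHn; ring. Qed.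

Lemma sum_const n c : sumR_upto n (fun _ => c) = INR n * c.
Proof. induction n; simpl sumR_upto; [simpl; ring|]. rewrite IHn, S_INR. ring. Qed.

Lemma sum_zero n f : (forall i, (i < n)%nat -> f i = 0) -> sumR_upto n f = 0.
Proof. intros E. rewrite (sum_ext n f (fun _ => 0)), sum_const by auto. ring. Qed.

Lemma sum_swap n m (f : nat -> nat -> R) :
  sumR_upto n (fun i => sumR_upto m (fun j => f i j))
  = sumR_upto m (fun j => sumR_upto n (fun i => f i j)).
Proof.
  induction n; simpl.
  - symmetry; apply sum_zero; auto.
  - rewrite IHn, <- sum_plus. reflexivity.
Qed.

Lemma sum_first n f : sumR_upto (S n) f = f 0%nat + sumR_upto n (fun j => f (S j)).
Proof. induction n; simpl; [ring|]. simpl in IHn. rewrite IHn; ring. Qed.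

Lemma sum_app a b f :
  sumR_upto (a + b) f = sumR_upto a f + sumR_upto b (fun j => f (a + j)%nat).
Proof. induction b; simpl; [rewrite Nat.add_0_r; ring|]. rewrite Nat.add_succ_r; simpl. rewrite IHb. ring. Qed.

Lemma sum_blocks N K f :
  sumR_upto (N * K) f = sumR_upto K (fun k => sumR_upto N (fun j => f (N * k + j)%nat)).
Proof.
  induction K; [rewrite Nat.mul_0_r; reflexivity|].
  rewrite Nat.mul_succ_r, sum_app, IHK. reflexivity.
Qed.

Lemma sum_le n f g : (forall i, (i < n)%nat -> f i <= g i) -> sumR_upto n f <= sumR_upto n g.
Proof.
  induction n; intros Hfg; simpl; [lra|].
  apply Rplus_le_compat; [apply IHn; intros; apply Hfg|apply Hfg]; lia.
Qed.

Lemma sum_abs_le n f : Rabs (sumR_upto n f) <= sumR_upto n (fun i => Rabs (f i)).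
Proof.
  induction n; simpl; [rewrite Rabs_R0; lra|].
  eapply Rle_trans; [apply Rabs_triang|]. lra.
Qed.

Lemma alg_sum n f : (forall i, alg (f i)) -> alg (sumR_upto n f).
Proof. intros Hf; induction n; simpl; [apply (alg_INR 0)|apply alg_add; auto]. Qed.

(* A homogeneous linear system
   with algebraic coefficients and more unknowns than equations has a
   nontrivial algebraic solution (Gaussian elimination of the last unknown). *)
Lemma alg_homogeneous_solution (n : nat) (rows : list (nat -> R)) :
  (length rows < n)%nat -> (forall row, In row rows -> forall j, alg (row j)) ->
  exists lam : nat -> R, (forall j, alg (lam j)) /\ (exists j, (j < n)%nat /\ lam j <> 0) /\
    forall row, In row rows -> sumR_upto n (fun j => lam j * row j) = 0.
Proof.
  revert rows; induction n as [|n IH]; intros rows Hlen Halg; [lia|].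
  destruct (classic (forall row, In row rows -> row n = 0)) as [Hz|Hnz].
  - (* the last unknown does not occur: take the n-th unit vector *)
    exists (fun j => if Nat.eqb j n then 1 else 0). split; [|split].
    + intros j; destruct (Nat.eqb j n); apply alg_IZR.
    + exists n; split; [lia|]. rewrite Nat.eqb_refl; lra.
    + intros row Hrow. simpl. rewrite Nat.eqb_refl, Hz by auto.
      rewrite sum_zero; [ring|]. intros j Hj.
      replace (Nat.eqb j n) with false by (symmetry; apply Nat.eqb_neq; lia). ring.
  - (* pivot on an equation p involving the last unknown *)
    destruct (not_all_ex_not _ _ Hnz) as [p Hp].
    destruct (imply_to_and _ _ Hp) as [Hp_in Hpn].
    destruct (in_split p rows Hp_in) as [l1 [l2 Erows]].
    set (eliminate := fun (row : nat -> R) j => row j - row n / p n * p j).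
    destruct (IH (map eliminate (l1 ++ l2))) as [mu [Hmu_alg [Hmu_nz Hmu]]].
    { rewrite length_map, length_app. rewrite Erows, length_app in Hlen. simpl in Hlen. lia. }
    { intros row' Hrow' j. apply in_map_iff in Hrow'. destruct Hrow' as [row [<- Hrow]].
      assert (In row rows) by (rewrite Erows; apply in_app_or in Hrow; apply in_or_app; simpl; tauto).
      apply alg_sub; [|apply alg_mul; [apply alg_div|]]; apply Halg; auto. }
    set (Sp := sumR_upto n (fun j => mu j * p j)).
    exists (fun j => if Nat.eqb j n then - Sp / p n else mu j). split; [|split].
    + intros j; destruct (Nat.eqb j n); auto.
      apply alg_div; [apply alg_opp, alg_sum; intros; apply alg_mul|]; auto.
    + destruct Hmu_nz as [j0 [Hj0 Hmu0]]. exists j0; split; [lia|].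
      replace (Nat.eqb j0 n) with false by (symmetry; apply Nat.eqb_neq; lia). auto.
    + intros row Hrow. simpl. rewrite Nat.eqb_refl.
      rewrite (sum_ext n _ (fun j => mu j * row j)).
      2:{ intros j Hj. replace (Nat.eqb j n) with false by (symmetry; apply Nat.eqb_neq; lia). auto. }
      rewrite Erows in Hrow. apply in_app_or in Hrow. simpl in Hrow.
      destruct (classic (row = p)) as [->|Hne].
      * fold Sp. field. auto.
      * assert (Hred : In (eliminate row) (map eliminate (l1 ++ l2))).
        { apply in_map, in_or_app.
          destruct Hrow as [H|[H|H]]; [left | congruence | right]; auto. }
        specialize (Hmu _ Hred). unfold eliminate in Hmu.
        rewrite (sum_ext n _ (fun j => mu j * row j - row n / p n * (mu j * p j))),
          sum_minus, sum_scal in Hmu by (intros; ring).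
        fold Sp in Hmu. field_simplify; [|auto].
        replace (sumR_upto n (fun j => mu j * row j)) with (row n / p n * Sp) by lra.
        field. auto.
Qed.

Inductive span (Y : list R) : R -> Prop :=
| span_in y : In y Y -> span Y y
| span_zero : span Y 0
| span_add x z : span Y x -> span Y z -> span Y (x + z)
| span_scal c x : alg c -> span Y x -> span Y (c * x).

Lemma span_incl Y Y' x : incl Y Y' -> span Y x -> span Y' x.
Proof. intros Hi; induction 1; [apply span_in; auto|apply span_zero|apply span_add|apply span_scal]; auto. Qed.

Lemma span_sub Y a b : span Y a -> span Y b -> span Y (a - b).
Proof.
  intros Ha Hb. replace (a - b) with (a + (-1) * b) by ring.
  apply span_add, span_scal; auto. apply alg_IZR.
Qed.

Lemma span_alg Y c : In 1 Y -> alg c -> span Y c.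
Proof. intros I Hc. replace c with (c * 1) by ring. apply span_scal, span_in; auto. Qed.

Lemma span_cancel Y c x : alg c -> c <> 0 -> span Y (c * x) -> span Y x.
Proof.
  intros Hc Hc0 Hx. replace x with (/ c * (c * x)) by (field; auto).
  apply span_scal; auto. apply alg_inv; auto.
Qed.

Lemma span_sum Y N f : (forall j, (j < N)%nat -> span Y (f j)) -> span Y (sumR_upto N f).
Proof.
  induction N; intros Hf; simpl; [apply span_zero|].
  apply span_add; [apply IHN; intros|]; apply Hf; lia.
Qed.

Lemma span_coords Y x : span Y x -> exists c : nat -> R, (forall k, alg (c k)) /\
  x = sumR_upto (length Y) (fun k => c k * nth k Y 0).
Proof.
  induction 1 as [y Hy| |x z _ [c1 [H1 E1]] _ [c2 [H2 E2]]|a x Ha _ [c1 [H1 E1]]].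
  - destruct (In_nth Y y 0 Hy) as [k [Hk Hnth]].
    exists (fun j => if Nat.eqb j k then 1 else 0). split; [intros j; destruct (Nat.eqb j k); apply alg_IZR|].
    replace (length Y) with (k + S (length Y - S k))%nat by lia.
    rewrite sum_app, sum_first, Nat.add_0_r, Nat.eqb_refl, Hnth.
    rewrite sum_zero, (sum_zero (length Y - S k)); [ring| |].
    + intros j Hj. replace (Nat.eqb (k + S j) k) with false by (symmetry; apply Nat.eqb_neq; lia). ring.
    + intros j Hj. replace (Nat.eqb j k) with false by (symmetry; apply Nat.eqb_neq; lia). ring.
  - exists (fun _ => 0). split; [intros; apply alg_IZR|]. symmetry; apply sum_zero; intros; ring.
  - exists (fun k => c1 k + c2 k). split; [intros; apply alg_add; auto|].
    rewrite E1, E2, <- sum_plus. apply sum_ext; intros; ring.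
  - exists (fun k => a * c1 k). split; [intros; apply alg_mul; auto|].
    rewrite E1, <- sum_scal. apply sum_ext; intros; ring.
Qed.

Lemma lin_comb_sum xs f s :
  lin_comb (map f (seq s (length xs))) xs
  = sumR_upto (length xs) (fun j => f (s + j)%nat * nth j xs 0).
Proof.
  revert s; induction xs as [|x xs IH]; intros s; [reflexivity|].
  change (length (x :: xs)) with (S (length xs)). rewrite sum_first.
  simpl. rewrite IH, Nat.add_0_r. f_equal.
  apply sum_ext; intros. do 2 f_equal. lia.
Qed.

Lemma alg_lin_indep_length_le (Y xs : list R) :
  (forall x, In x xs -> span Y x) -> alg_lin_indep xs -> (length xs <= length Y)%nat.
Proof.
  intros Hspan Hind. destruct (Nat.le_gt_cases (length xs) (length Y)) as [|Hlt]; auto.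
  exfalso.
  assert (Hcoords : forall j, exists c : nat -> R, (forall k, alg (c k)) /\
            ((j < length xs)%nat -> nth j xs 0 = sumR_upto (length Y) (fun k => c k * nth k Y 0))).
  { intros j. destruct (Nat.lt_ge_cases j (length xs)) as [Hj|Hj].
    - destruct (span_coords Y (nth j xs 0) (Hspan _ (nth_In xs 0 Hj))) as [c [Hc E]].
      exists c; auto.
    - exists (fun _ => 0). split; [intros; apply alg_IZR|lia]. }
  destruct (choice _ Hcoords) as [C HC].
  set (rows := map (fun k j => C j k) (seq 0 (length Y))).
  destruct (alg_homogeneous_solution (length xs) rows) as [lam [Hlam [[j0 [Hj0 Hlam0]] Hsol]]].
  { unfold rows; rewrite length_map, length_seq; auto. }
  { intros row Hrow j. unfold rows in Hrow. apply in_map_iff in Hrow.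
    destruct Hrow as [k [<- _]]. apply HC. }
  set (cs := map lam (seq 0 (length xs))).
  assert (Hzero : Forall (fun c => c = 0) cs).
  { apply Hind.
    - unfold cs; rewrite length_map, length_seq; auto.
    - apply Forall_forall; intros c Hc. unfold cs in Hc. apply in_map_iff in Hc.
      destruct Hc as [j [<- _]]. apply alg_is_algebraic, Hlam.
    - unfold cs; rewrite lin_comb_sum. simpl.
      rewrite (sum_ext _ _ (fun j => sumR_upto (length Y) (fun k => lam j * C j k * nth k Y 0))).
      2:{ intros j Hj. rewrite (proj2 (HC j)), <- sum_scal by auto. apply sum_ext; intros; ring. }
      rewrite sum_swap. apply sum_zero. intros k Hk.
      rewrite (sum_ext _ _ (fun j => nth k Y 0 * (lam j * C j k))), sum_scal by (intros; ring).
      rewrite Hsol; [ring|]. unfold rows. apply (in_map (fun k j => C j k)), in_seq. lia. }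
  rewrite Forall_forall in Hzero. apply Hlam0, Hzero. unfold cs. apply in_map, in_seq. lia.
Qed.

Lemma Un_cv_ext u v l : (forall n, u n = v n) -> Un_cv u l -> Un_cv v l.
Proof. intros E Hu eps He. destruct (Hu eps He) as [N HN]. exists N; intros n Hn. rewrite <- E; auto. Qed.

Lemma Un_cv_const c : Un_cv (fun _ => c) c.
Proof. intros eps He. exists 0%nat; intros. unfold R_dist. rewrite Rminus_diag, Rabs_R0; auto. Qed.

Lemma Un_cv_scal c u l : Un_cv u l -> Un_cv (fun n => c * u n) (c * l).
Proof. intros Hu. apply CV_mult; auto. apply Un_cv_const. Qed.

Lemma Un_cv_reindex u l (g : nat -> nat) :
  (forall n, (n <= g n)%nat) -> Un_cv u l -> Un_cv (fun n => u (g n)) l.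
Proof.
  intros Hg Hu eps He. destruct (Hu eps He) as [N HN].
  exists N; intros n Hn. apply HN. specialize (Hg n); lia.
Qed.

Lemma Un_cv_sum N (u : nat -> nat -> R) (l : nat -> R) :
  (forall j, (j < N)%nat -> Un_cv (u j) (l j)) ->
  Un_cv (fun K => sumR_upto N (fun j => u j K)) (sumR_upto N l).
Proof.
  induction N; intros Hu; simpl; [apply Un_cv_const|].
  apply CV_plus; [apply IHN; intros|]; apply Hu; lia.
Qed.

Lemma Un_cv_abs_le u l B : Un_cv u l -> (forall n, Rabs (u n) <= B) -> Rabs l <= B.
Proof.
  intros Hu Hb. destruct (Rle_or_lt (Rabs l) B) as [|Hlt]; auto. exfalso.
  destruct (Hu (Rabs l - B)) as [N HN]; [lra|]. specialize (HN N (le_n N)). specialize (Hb N).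
  unfold R_dist in HN. pose proof (Rabs_triang_inv l (u N)).
  rewrite <- Rabs_Ropp in HN. replace (- (u N - l)) with (l - u N) in HN by ring. lra.
Qed.

Lemma ln_1_plus_le x : -1 < x -> ln (1 + x) <= x.
Proof.
  intros Hx. destruct (exp_ineq1_le x) as [Hlt|Heq].
  - left. rewrite <- (ln_exp x) at 2. apply ln_increasing; lra.
  - right. rewrite Heq, ln_exp. reflexivity.
Qed.

(* Partial sums: H_r is the limit of harmonic K - shifted_harmonic r K,
   since r / (k (r + k)) = 1/k - 1/(k + r). *)
Definition harmonic (K : nat) : R := sumR_upto K (fun k => / (INR k + 1)).
Definition shifted_harmonic (r : R) (K : nat) : R := sumR_upto K (fun k => / (INR k + 1 + r)).
Definition harm_term (r : R) (k : nat) : R := / (INR (S k) * (r + INR (S k))).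

Lemma sum_f_R0_sumR f n : sum_f_R0 f n = sumR_upto (S n) f.
Proof. induction n; simpl; [ring|]. rewrite IHn; reflexivity. Qed.

Lemma inv_square_sum_bound K : sumR_upto K (fun k => / (INR k + 1) ^ 2) <= 2 - 2 / (INR K + 1).
Proof.
  induction K; [simpl; lra|]. rewrite sum_S.
  rewrite S_INR. pose proof (pos_INR K).
  assert (/ (INR K + 1) ^ 2 <= 2 / (INR K + 1) - 2 / (INR K + 1 + 1)).
  { replace (2 / (INR K + 1) - 2 / (INR K + 1 + 1))
      with (/ ((INR K + 1) * (INR K + 1 + 1) / 2)) by (field; lra).
    apply Rinv_le_contravar; [apply Rmult_lt_0_compat; [apply Rmult_lt_0_compat|]; lra|].
    simpl. nra. }
  lra.
Qed.

Lemma harm_series_limit r : 0 <= r -> Un_cv (fun K => sumR_upto K (harm_term r)) (harm_series r).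
Proof.
  intros Hr. set (u := fun K => sumR_upto K (harm_term r)).
  assert (Hterm : forall k, 0 < harm_term r k <= / (INR k + 1) ^ 2).
  { intros k. unfold harm_term. rewrite S_INR. pose proof (pos_INR k). split.
    - apply Rinv_0_lt_compat, Rmult_lt_0_compat; lra.
    - apply Rinv_le_contravar; [simpl; apply Rmult_lt_0_compat|simpl]; nra. }
  assert (Hgrow : Un_growing u) by (intros K; unfold u; rewrite sum_S; specialize (Hterm K); lra).
  assert (Hbound : bound (EUn u)).
  { exists 2. intros x [K ->]. unfold u.
    apply Rle_trans with (sumR_upto K (fun k => / (INR k + 1) ^ 2)); [apply sum_le; intros; apply Hterm|].
    pose proof (inv_square_sum_bound K). pose proof (pos_INR K).
    assert (0 <= 2 / (INR K + 1)) by (apply Rle_mult_inv_pos; lra). lra. }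
  destruct (growing_cv u Hgrow Hbound) as [l Hl].
  assert (Hsum : infinite_sum (harm_term r) l).
  { intros eps He. destruct (Hl eps He) as [N HN]. exists N. intros n Hn.
    rewrite sum_f_R0_sumR. apply HN. lia. }
  assert (Hdef : infinite_sum (harm_term r) (harm_series r)).
  { unfold harm_series. apply epsilon_spec. exists l. exact Hsum. }
  rewrite (uniqueness_sum _ _ _ Hdef Hsum). exact Hl.
Qed.

Lemma H_partial_limit r : 0 <= r -> Un_cv (fun K => harmonic K - shifted_harmonic r K) (H r).
Proof.
  intros Hr. apply Un_cv_ext with (fun K => r * sumR_upto K (harm_term r)).
  - intros K. unfold harmonic, shifted_harmonic. induction K; [simpl; ring|].
    rewrite !sum_S, Rmult_plus_distr_l, IHK. unfold harm_term. rewrite S_INR.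
    pose proof (pos_INR K). field. split; lra.
  - apply Un_cv_scal, harm_series_limit; auto.
Qed.

Lemma H_0 : H 0 = 0.
Proof. unfold H. ring. Qed.

Lemma H_1 : H 1 = 1.
Proof.
  apply UL_sequence with (fun K => harmonic K - shifted_harmonic 1 K); [apply H_partial_limit; lra|].
  apply Un_cv_ext with (fun K => 1 - RinvN K).
  - intros K. simpl. unfold harmonic, shifted_harmonic. induction K; [simpl; field|].
    rewrite !sum_S, S_INR. pose proof (pos_INR K).
    replace (sumR_upto K (fun k => / (INR k + 1)) + / (INR K + 1) -
      (sumR_upto K (fun k => / (INR k + 1 + 1)) + / (INR K + 1 + 1)))
    with ((sumR_upto K (fun k => / (INR k + 1)) - sumR_upto K (fun k => / (INR k + 1 + 1)))
         + / (INR K + 1) - / (INR K + 1 + 1)) by ring.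
    rewrite <- IHK. field. lra.
  - pose proof (CV_minus _ _ _ _ (Un_cv_const 1) RinvN_cv) as Hlim.
    rewrite Rminus_0_r in Hlim. exact Hlim.
Qed.

(* H is 2-Lipschitz on [0, +oo): each partial difference is bounded by
   |r - t| * sum 1/(k+1)^2 <= 2 |r - t|. *)
Lemma H_lipschitz r t : 0 <= r -> 0 <= t -> Rabs (H r - H t) <= 2 * Rabs (r - t).
Proof.
  intros Hr Ht.
  apply Un_cv_abs_le with (fun K => (harmonic K - shifted_harmonic r K) - (harmonic K - shifted_harmonic t K)).
  { apply CV_minus; apply H_partial_limit; auto. }
  intros K.
  replace (harmonic K - shifted_harmonic r K - (harmonic K - shifted_harmonic t K)) with
    (sumR_upto K (fun k => (r - t) * / ((INR k + 1 + t) * (INR k + 1 + r)))).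
  2:{ unfold shifted_harmonic. induction K; [simpl; ring|]. rewrite !sum_S, IHK.
      pose proof (pos_INR K). field. split; lra. }
  rewrite sum_scal, Rabs_mult, Rmult_comm. apply Rmult_le_compat_r; [apply Rabs_pos|].
  eapply Rle_trans; [apply sum_abs_le|].
  eapply Rle_trans; [apply (sum_le _ _ (fun k => / (INR k + 1) ^ 2))|].
  - intros k Hk. pose proof (pos_INR k).
    rewrite Rabs_right by (apply Rle_ge, Rlt_le, Rinv_0_lt_compat, Rmult_lt_0_compat; lra).
    apply Rinv_le_contravar; [simpl; apply Rmult_lt_0_compat|simpl]; nra.
  - pose proof (inv_square_sum_bound K). pose proof (pos_INR K).
    assert (0 <= 2 / (INR K + 1)) by (apply Rle_mult_inv_pos; lra). lra.
Qed.

Lemma harmonic_diff_bounds K d : (1 <= K)%nat ->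
  ln (INR (K + d) + 1) - ln (INR K + 1) <= harmonic (K + d) - harmonic K
  <= ln (INR (K + d)) - ln (INR K).
Proof.
  intros HK. induction d; [rewrite Nat.add_0_r; lra|].
  rewrite Nat.add_succ_r. unfold harmonic in *. rewrite sum_S, S_INR.
  assert (1 <= INR (K + d)) by (apply (le_INR 1); lia).
  set (x := INR (K + d)) in *.
  assert (Hup : ln (x + 1 + 1) - ln (x + 1) <= / (x + 1)).
  { replace (x + 1 + 1) with ((x + 1) * (1 + / (x + 1))) by (field; lra).
    assert (0 < / (x + 1)) by (apply Rinv_0_lt_compat; lra).
    rewrite ln_mult by lra. pose proof (ln_1_plus_le (/ (x + 1))). lra. }
  assert (Hlo : / (x + 1) <= ln (x + 1) - ln x).
  { assert (/ (x + 1) < 1) by (rewrite <- Rinv_1; apply Rinv_lt_contravar; lra).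
    assert (0 < / (x + 1)) by (apply Rinv_0_lt_compat; lra).
    assert (ln x = ln (x + 1) + ln (1 + - / (x + 1)))
      by (rewrite <- ln_mult by lra; f_equal; field; lra).
    pose proof (ln_1_plus_le (- / (x + 1))). lra. }
  lra.
Qed.

Lemma harmonic_dilation_limit N : (1 <= N)%nat ->
  Un_cv (fun K => harmonic (N * K + N - 1) - harmonic K) (ln (INR N)).
Proof.
  intros HN eps He.
  destruct (archimed_cor1 eps He) as [K0 [HK0 HK0pos]].
  exists K0. intros K HK. unfold R_dist.
  assert (HKr : 1 <= INR K) by (apply (le_INR 1); lia).
  assert (HNr : 1 <= INR N) by (apply (le_INR 1); lia).
  replace (N * K + N - 1)%nat with (K + (N * K + N - 1 - K))%nat in * by nia.
  destruct (harmonic_diff_bounds K (N * K + N - 1 - K) ltac:(lia)) as [Lo Up].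
  replace (K + (N * K + N - 1 - K))%nat with (N * K + N - 1)%nat in * by nia.
  assert (E : INR (N * K + N - 1) + 1 = INR N * (INR K + 1))
    by (rewrite minus_INR by nia; rewrite plus_INR, mult_INR; simpl; ring).
  rewrite E, ln_mult in Lo by lra.
  assert (Hpos : 1 <= INR (N * K + N - 1)) by (apply (le_INR 1); nia).
  assert (Up' : ln (INR (N * K + N - 1)) <= ln (INR N) + ln (INR K + 1)).
  { rewrite <- ln_mult, <- E by lra. left. apply ln_increasing; lra. }
  assert (Hstep : ln (INR K + 1) - ln (INR K) <= / INR K).
  { replace (INR K + 1) with (INR K * (1 + / INR K)) by (field; lra).
    assert (0 < / INR K) by (apply Rinv_0_lt_compat; lra).
    rewrite ln_mult by lra. pose proof (ln_1_plus_le (/ INR K)). lra. }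
  assert (/ INR K <= / INR K0) by (apply Rinv_le_contravar; [apply lt_0_INR; lia|apply le_INR; lia]).
  apply Rabs_def1; lra.
Qed.

Lemma shifted_harmonic_blocks N s K : (1 <= N)%nat ->
  sumR_upto K (fun k => sumR_upto N (fun j => / (INR N * (INR k + 1) + s + INR j)))
  = shifted_harmonic s (N * K + N - 1) - shifted_harmonic s (N - 1).
Proof.
  intros HN. replace (N * K + N - 1)%nat with ((N - 1) + N * K)%nat by nia.
  unfold shifted_harmonic at 1. rewrite sum_app, sum_blocks.
  fold (shifted_harmonic s (N - 1)). ring_simplify.
  apply sum_ext; intros k Hk. apply sum_ext; intros j Hj.
  rewrite plus_INR, plus_INR, mult_INR, minus_INR by lia. simpl. f_equal. ring.
Qed.

Lemma shifted_harmonic_scale N s j K : (1 <= N)%nat -> 0 <= s ->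
  shifted_harmonic ((s + INR j) / INR N) K
  = INR N * sumR_upto K (fun k => / (INR N * (INR k + 1) + s + INR j)).
Proof.
  intros HN Hs. unfold shifted_harmonic. rewrite <- sum_scal. apply sum_ext. intros k Hk.
  assert (1 <= INR N) by (apply (le_INR 1); lia).
  pose proof (pos_INR k). pose proof (pos_INR j).
  field. split; [nra|lra].
Qed.

Lemma H_multiplication (N : nat) (s : R) : (1 <= N)%nat -> 0 <= s ->
  sumR_upto N (fun j => H ((s + INR j) / INR N)) =
  INR N * H s + INR N * shifted_harmonic s (N - 1) - INR N * ln (INR N).
Proof.
  intros HN Hs.
  assert (HNr : 1 <= INR N) by (apply (le_INR 1); lia).
  apply UL_sequence with
    (fun K => sumR_upto N (fun j => harmonic K - shifted_harmonic ((s + INR j) / INR N) K)).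
  { apply Un_cv_sum. intros j _. apply H_partial_limit.
    pose proof (pos_INR j). apply Rle_mult_inv_pos; lra. }
  set (L := fun K => (N * K + N - 1)%nat).
  apply Un_cv_ext with (fun K => INR N * (harmonic (L K) - shifted_harmonic s (L K))
                                 + INR N * shifted_harmonic s (N - 1)
                                 - INR N * (harmonic (L K) - harmonic K)).
  - intros K. rewrite sum_minus, sum_const.
    rewrite (sum_ext N _ (fun j => INR N * sumR_upto K (fun k => / (INR N * (INR k + 1) + s + INR j))))
      by (intros; apply shifted_harmonic_scale; auto).
    rewrite sum_scal, sum_swap, shifted_harmonic_blocks by auto. unfold L. ring.
  - apply CV_minus; [apply CV_plus; [|apply Un_cv_const]|]; apply Un_cv_scal.
    + apply Un_cv_reindex with (u := fun M => harmonic M - shifted_harmonic s M);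
        [intros; unfold L; nia|apply H_partial_limit; auto].
    + apply harmonic_dilation_limit; auto.
Qed.

Lemma H_duplication s : 0 <= s -> H (s / 2) + H ((s + 1) / 2) = 2 * H s + 2 / (s + 1) - 2 * ln 2.
Proof.
  intros Hs. pose proof (H_multiplication 2 s ltac:(lia) Hs) as D.
  unfold shifted_harmonic in D. simpl in D.
  replace (1 + 1) with 2 in D by ring.
  replace ((s + 0) / 2) with (s / 2) in D by field.
  replace (2 / (s + 1)) with (2 * / (0 + 1 + s)) by (field; lra).
  lra.
Qed.

Lemma sin_lower_bound u : 0 <= u <= 1 -> u - u ^ 3 / 6 <= sin u.
Proof.
  intros Hu. pose proof PI2_1 as Hpi2.
  destruct (SIN u) as [Hl _]; try lra.
  unfold sin_lb, sin_approx in Hl. simpl sum_f_R0 in Hl. unfold sin_term in Hl.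
  replace (INR (fact (2 * 3 + 1))) with 5040 in Hl by (rewrite INR_IZR_INZ; reflexivity).
  replace (INR (fact (2 * 2 + 1))) with 120 in Hl by (rewrite INR_IZR_INZ; reflexivity).
  replace (INR (fact (2 * 1 + 1))) with 6 in Hl by (rewrite INR_IZR_INZ; reflexivity).
  replace (INR (fact (2 * 0 + 1))) with 1 in Hl by (rewrite INR_IZR_INZ; reflexivity).
  simpl in Hl |- *.
  assert (P5 : 0 <= u * (u * (u * (u * (u * 1))))) by (repeat apply Rmult_le_pos; lra).
  assert (P7 : u * (u * (u * (u * (u * (u * (u * 1)))))) <= u * (u * (u * (u * (u * 1))))).
  { replace (u * (u * (u * (u * (u * (u * (u * 1)))))))
      with ((u * (u * (u * (u * (u * 1))))) * (u * u)) by ring.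
    assert (u * u <= 1) by nra. nra. }
  lra.
Qed.

Lemma cos_lower_bound u : 0 <= u <= 1 -> 1 - u ^ 2 / 2 <= cos u.
Proof.
  intros Hu. replace (cos u) with (1 - 2 * sin (u / 2) * sin (u / 2))
    by (rewrite <- cos_2a_sin; f_equal; field).
  pose proof PI2_1 as Hpi2.
  assert (0 <= sin (u / 2)) by (apply sin_ge_0; lra).
  destruct (Req_dec u 0) as [->|Hu0].
  - replace (0 / 2) with 0 by field. rewrite sin_0. simpl. lra.
  - assert (sin (u / 2) < u / 2) by (apply sin_lt_x; lra). simpl. nra.
Qed.

Lemma cot_near_zero u : 0 < u <= 1 -> Rabs (/ u - cot u) <= u.
Proof.
  intros Hu. unfold cot.
  pose proof (sin_lt_x u ltac:(lra)) as S1. pose proof (sin_lower_bound u ltac:(lra)) as S2.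
  pose proof (cos_lower_bound u ltac:(lra)) as C1. pose proof (COS_bound u) as [_ C2].
  simpl in S2, C1.
  assert (Hs : 0 < sin u) by (assert (u * (u * (u * 1)) / 6 < u) by nra; lra).
  assert (Hus : 0 < u * sin u) by nra.
  replace (/ u - cos u / sin u) with ((sin u - u * cos u) / (u * sin u)) by (field; lra).
  assert (Q : (sin u - u * cos u) / (u * sin u) * (u * sin u) = sin u - u * cos u) by (field; lra).
  assert (L1 : sin u - u * cos u <= u * (u * u) / 2) by nra.
  assert (L2 : - (u * (u * u)) / 6 <= sin u - u * cos u) by nra.
  assert (L3 : u * (u * u) <= u * (u * sin u) * 2) by (assert (u * u / 2 <= sin u * u) by nra; nra).
  apply Rabs_le; split; apply Rmult_le_reg_r with (u * sin u); auto; rewrite Q; nra.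
Qed.

Lemma cot_duplication x : 0 < x < 1 ->
  cot (PI * (x / 2)) + cot (PI * ((x + 1) / 2)) = 2 * cot (PI * x).
Proof.
  intros Hx. pose proof PI_RGT_0 as Hpi. set (t := PI * (x / 2)).
  replace (PI * ((x + 1) / 2)) with (t + PI / 2) by (unfold t; field).
  replace (PI * x) with (2 * t) by (unfold t; field).
  unfold cot. rewrite sin_2a, cos_2a, sin_plus, cos_plus, sin_PI2, cos_PI2.
  assert (0 < sin t) by (apply sin_gt_0; unfold t; nra).
  assert (0 < cos t) by (apply cos_gt_0; unfold t; nra).
  field. lra.
Qed.

Lemma cot_reflection x : cot (PI * (1 - x)) = - cot (PI * x).
Proof.
  unfold cot. replace (PI * (1 - x)) with (PI - PI * x) by ring.
  rewrite sin_PI_x, cos_minus, cos_PI, sin_PI. unfold Rdiv. ring.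
Qed.

(* The reflection formula H(x) - H(1-x) = 1/x - 1/(1-x) - pi cot(pi x) on
   (0,1) is proved by showing that the defect below vanishes: it is
   continuous on [0,1] (after extension by 0), vanishes at the endpoints,
   and satisfies the duplication identity d(x/2) + d((x+1)/2) = 2 d(x);
   such a function cannot have a positive maximum. *)
Definition reflection_rhs (x : R) : R := / x - / (1 - x) - PI * cot (PI * x).
Definition reflection_defect (x : R) : R := H x - H (1 - x) - reflection_rhs x.

Lemma reflection_defect_duplication x : 0 < x < 1 ->
  reflection_defect (x / 2) + reflection_defect ((x + 1) / 2) = 2 * reflection_defect x.
Proof.
  intros Hx. unfold reflection_defect, reflection_rhs.
  pose proof (cot_duplication x Hx) as C.
  pose proof (H_duplication x ltac:(lra)) as D1.
  pose proof (H_duplication (1 - x) ltac:(lra)) as D2.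
  replace (1 - x / 2) with ((1 - x + 1) / 2) by field.
  replace (1 - (x + 1) / 2) with ((1 - x) / 2) by field.
  replace (PI * cot (PI * (x / 2))) with (PI * (2 * cot (PI * x) - cot (PI * ((x + 1) / 2))))
    by (rewrite <- C; ring).
  replace (2 / (1 - x + 1)) with (2 / (2 - x)) in D2 by (f_equal; ring).
  assert (E : / (x / 2) - / (1 - x / 2) + (/ ((x + 1) / 2) - / (1 - (x + 1) / 2))
              = 2 * (/ x - / (1 - x)) + 2 / (x + 1) - 2 / (2 - x)) by (field; repeat split; lra).
  replace (1 - x / 2) with ((1 - x + 1) / 2) in E by field.
  replace (1 - (x + 1) / 2) with ((1 - x) / 2) in E by field.
  lra.
Qed.

Lemma reflection_defect_symm x : reflection_defect (1 - x) = - reflection_defect x.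
Proof.
  unfold reflection_defect, reflection_rhs. rewrite cot_reflection.
  replace (1 - (1 - x)) with x by ring. ring.
Qed.

Lemma reflection_defect_small x : 0 < x <= 1 / 4 -> Rabs (reflection_defect x) <= 22 * x.
Proof.
  intros Hx. pose proof PI_RGT_0 as Hpi. pose proof PI_4 as Hpi4.
  replace (reflection_defect x) with
    ((H x - H 0) - (H (1 - x) - H 1) + (/ (1 - x) - 1) + (PI * cot (PI * x) - / x))
    by (unfold reflection_defect, reflection_rhs; rewrite H_0, H_1; ring).
  pose proof (H_lipschitz x 0 ltac:(lra) ltac:(lra)) as L1.
  pose proof (H_lipschitz (1 - x) 1 ltac:(lra) ltac:(lra)) as L2.
  replace (x - 0) with x in L1 by ring. replace (1 - x - 1) with (- x) in L2 by ring.
  rewrite Rabs_Ropp in L2. rewrite (Rabs_right x) in L1, L2 by lra.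
  assert (L3 : Rabs (/ (1 - x) - 1) <= 2 * x).
  { replace (/ (1 - x) - 1) with (x / (1 - x)) by (field; lra).
    rewrite Rabs_right by (apply Rle_ge, Rle_mult_inv_pos; lra).
    apply Rmult_le_reg_r with (1 - x); [lra|]. unfold Rdiv. rewrite Rmult_assoc, Rinv_l by lra. nra. }
  assert (L4 : Rabs (PI * cot (PI * x) - / x) <= 16 * x).
  { pose proof (cot_near_zero (PI * x) ltac:(split; nra)) as CB.
    replace (PI * cot (PI * x) - / x) with (- PI * (/ (PI * x) - cot (PI * x))) by (field; lra).
    rewrite Rabs_mult, Rabs_Ropp, Rabs_right by lra.
    apply Rle_trans with (PI * (PI * x)); [apply Rmult_le_compat_l; lra|].
    replace (PI * (PI * x)) with ((PI * PI) * x) by ring.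
    apply Rmult_le_compat_r; nra. }
  pose proof (Rabs_triang (H x - H 0 - (H (1 - x) - H 1) + (/ (1 - x) - 1))
                          (PI * cot (PI * x) - / x)) as T1.
  pose proof (Rabs_triang (H x - H 0 - (H (1 - x) - H 1)) (/ (1 - x) - 1)) as T2.
  assert (T3 : Rabs (H x - H 0 - (H (1 - x) - H 1)) <= Rabs (H x - H 0) + Rabs (H (1 - x) - H 1)).
  { rewrite <- (Rabs_Ropp (H (1 - x) - H 1)). apply Rabs_triang. }
  lra.
Qed.

Lemma H_continuous c : 0 < c -> continuity_pt H c.
Proof.
  intros Hc eps He. exists (Rmin c (eps / 3)). split; [apply Rmin_pos; lra|].
  intros x [_ Hx]. simpl in *. unfold Rdist in *.
  pose proof (Rmin_l c (eps / 3)) as M1. pose proof (Rmin_r c (eps / 3)) as M2.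
  assert (Hx0 : 0 <= x) by (apply Rabs_def2 in Hx; lra).
  pose proof (H_lipschitz x c Hx0 ltac:(lra)). lra.
Qed.

Lemma reflection_defect_continuous c : 0 < c < 1 -> continuity_pt reflection_defect c.
Proof.
  intros Hc. pose proof PI_RGT_0 as Hpi.
  assert (Hsin : sin (PI * c) <> 0) by (assert (0 < sin (PI * c)) by (apply sin_gt_0; nra); lra).
  assert (Hid : continuity_pt (fun x => x) c) by apply derivable_continuous_pt, derivable_pt_id.
  assert (Hconst : forall k, continuity_pt (fun _ => k) c) by (intros k; apply continuity_pt_const; intros ? ?; auto).
  assert (H1x : continuity_pt (fun x => 1 - x) c) by (apply continuity_pt_minus; auto).
  assert (Hpix : continuity_pt (fun x => PI * x) c) by (apply continuity_pt_mult; auto).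
  unfold reflection_defect, reflection_rhs, cot.
  repeat apply continuity_pt_minus.
  - apply H_continuous; lra.
  - apply (continuity_pt_comp (fun x => 1 - x) H); auto. apply H_continuous; lra.
  - apply continuity_pt_inv; auto; lra.
  - apply continuity_pt_inv; auto; lra.
  - apply continuity_pt_mult; auto. apply continuity_pt_div; auto.
    + apply (continuity_pt_comp (fun x => PI * x) cos); auto. apply continuity_cos.
    + apply (continuity_pt_comp (fun x => PI * x) sin); auto. apply continuity_sin.
Qed.

Definition defect_ext (x : R) : R :=
  if Rlt_dec 0 x then (if Rlt_dec x 1 then reflection_defect x else 0) else 0.

Lemma defect_ext_in x : 0 < x < 1 -> defect_ext x = reflection_defect x.
Proof. intros Hx. unfold defect_ext. destruct (Rlt_dec 0 x); [|lra]. destruct (Rlt_dec x 1); lra. Qed.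

Lemma defect_ext_out x : x <= 0 \/ 1 <= x -> defect_ext x = 0.
Proof. intros Hx. unfold defect_ext. destruct (Rlt_dec 0 x); auto. destruct (Rlt_dec x 1); auto. lra. Qed.

Lemma defect_ext_symm x : defect_ext (1 - x) = - defect_ext x.
Proof.
  destruct (Rlt_dec 0 x); destruct (Rlt_dec x 1).
  - rewrite !defect_ext_in by lra. apply reflection_defect_symm.
  - rewrite !defect_ext_out by lra. ring.
  - rewrite !defect_ext_out by lra. ring.
  - rewrite !defect_ext_out by lra. ring.
Qed.

Lemma defect_ext_small x : Rabs x < 1 / 4 -> Rabs (defect_ext x) <= 22 * Rabs x.
Proof.
  intros Hx. destruct (Rle_or_lt x 0) as [Hn|Hp].
  - rewrite defect_ext_out, Rabs_R0 by auto. pose proof (Rabs_pos x). lra.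
  - apply Rabs_def2 in Hx. rewrite defect_ext_in, (Rabs_right x) by lra.
    apply reflection_defect_small. lra.
Qed.

Lemma defect_ext_continuous_at_0 : continuity_pt defect_ext 0.
Proof.
  intros eps He. exists (Rmin (1 / 4) (eps / 23)). split; [apply Rmin_pos; lra|].
  intros x [_ Hx]. simpl in *. unfold Rdist in *. rewrite Rminus_0_r in Hx.
  rewrite (defect_ext_out 0), Rminus_0_r by lra.
  pose proof (Rmin_l (1 / 4) (eps / 23)). pose proof (Rmin_r (1 / 4) (eps / 23)).
  pose proof (defect_ext_small x ltac:(lra)). pose proof (Rabs_pos x). lra.
Qed.

Lemma defect_ext_continuous c : 0 <= c <= 1 -> continuity_pt defect_ext c.
Proof.
  intros Hc.
  destruct (Req_dec c 0) as [->|Hc0]; [apply defect_ext_continuous_at_0|].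
  destruct (Req_dec c 1) as [->|Hc1].
  - (* at 1, by the symmetry x -> 1 - x *)
    apply continuity_pt_locally_ext with (fun x => - defect_ext (1 - x)) 1; [lra| |].
    { intros x _. rewrite defect_ext_symm. ring. }
    apply continuity_pt_opp, (continuity_pt_comp (fun x => 1 - x) defect_ext).
    + apply continuity_pt_minus; [apply continuity_pt_const; intros ? ?; auto|].
      apply derivable_continuous_pt, derivable_pt_id.
    + replace (1 - 1) with 0 by ring. apply defect_ext_continuous_at_0.
  - apply continuity_pt_locally_ext with reflection_defect (Rmin c (1 - c)).
    { apply Rmin_pos; lra. }
    { intros y Hy. unfold Rdist in Hy. symmetry. apply defect_ext_in.
      pose proof (Rmin_l c (1 - c)). pose proof (Rmin_r c (1 - c)).
      apply Rabs_def2 in Hy. lra. }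
    apply reflection_defect_continuous. lra.
Qed.

Section MaximumPrinciple.

Variable phi : R -> R.
Hypothesis phi_dup : forall x, 0 < x < 1 -> phi (x / 2) + phi ((x + 1) / 2) = 2 * phi x.

(* If phi attains its maximum over [0,1] at M in (0,1), the duplication
   identity forces phi (M / 2) = phi (M / 2 + 1/2) = phi M, hence
   phi (M / 2^n) = phi M for all n. *)
Lemma max_halving M : 0 < M < 1 -> (forall y, 0 <= y <= 1 -> phi y <= phi M) ->
  forall n, 0 < M * (/ 2) ^ n < 1 /\ phi (M * (/ 2) ^ n) = phi M.
Proof.
  intros HM Hmax n. induction n as [|n [Hy Hp]].
  - simpl. rewrite Rmult_1_r. auto.
  - set (y := M * (/ 2) ^ n) in *.
    replace (M * (/ 2) ^ S n) with (y / 2) by (unfold y; simpl; field).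
    pose proof (phi_dup y Hy). pose proof (Hmax (y / 2) ltac:(lra)).
    pose proof (Hmax ((y + 1) / 2) ltac:(lra)). split; lra.
Qed.

Lemma duplication_nonpos :
  (forall c, 0 <= c <= 1 -> continuity_pt phi c) -> phi 0 = 0 -> phi 1 = 0 ->
  forall x, 0 <= x <= 1 -> phi x <= 0.
Proof.
  intros Hcont Hphi0 Hphi1 x Hx.
  destruct (continuity_ab_maj phi 0 1 ltac:(lra) Hcont) as [M [Hmax HM]].
  destruct (Rle_or_lt (phi M) 0) as [Hle|Hpos]; [specialize (Hmax x Hx); lra|].
  exfalso.
  assert (HM' : 0 < M < 1) by (destruct HM as [[A|A] [B|B]]; subst; lra).
  (* phi is continuous at 0 but takes the value phi M > 0 at points M / 2^n -> 0 *)
  destruct (Hcont 0 ltac:(lra) (phi M) Hpos) as [alp [Halp Hnear0]].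
  destruct (pow_lt_1_zero (/ 2) ltac:(rewrite Rabs_right; lra) (alp / M)
              ltac:(apply Rdiv_lt_0_compat; lra)) as [N HN].
  specialize (HN N (le_n N)).
  assert (Hhalf : 0 < (/ 2) ^ N) by (apply pow_lt; lra).
  rewrite Rabs_right in HN by lra.
  destruct (max_halving M HM' Hmax N) as [Hy Hp].
  specialize (Hnear0 (M * (/ 2) ^ N)). simpl in Hnear0. unfold Rdist in Hnear0.
  rewrite Hp, Hphi0, !Rminus_0_r, !Rabs_right in Hnear0 by lra.
  assert (M * (/ 2) ^ N < alp).
  { apply Rmult_lt_reg_l with (/ M); [apply Rinv_0_lt_compat; lra|].
    rewrite <- Rmult_assoc, Rinv_l, Rmult_1_l by lra. unfold Rdiv in HN. lra. }
  assert (phi M < phi M) by (apply Hnear0; repeat split; lra).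
  lra.
Qed.

End MaximumPrinciple.

Lemma reflection_defect_zero x : 0 < x < 1 -> reflection_defect x = 0.
Proof.
  intros Hx.
  assert (Dup : forall y, 0 < y < 1 -> defect_ext (y / 2) + defect_ext ((y + 1) / 2) = 2 * defect_ext y).
  { intros y Hy. rewrite !defect_ext_in by lra. apply reflection_defect_duplication; auto. }
  assert (Hle : defect_ext x <= 0).
  { apply (duplication_nonpos defect_ext); auto; try lra.
    - apply defect_ext_continuous.
    - apply defect_ext_out; lra.
    - apply defect_ext_out; lra. }
  assert (Hge : - defect_ext x <= 0).
  { apply (duplication_nonpos (fun y => - defect_ext y)); try lra.
    - intros y Hy. pose proof (Dup y Hy). lra.
    - intros c Hc. apply continuity_pt_opp, defect_ext_continuous; auto.
    - rewrite defect_ext_out; lra.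
    - rewrite defect_ext_out; lra. }
  rewrite <- defect_ext_in by auto. lra.
Qed.

Theorem H_reflection x : 0 < x < 1 -> H x - H (1 - x) = / x - / (1 - x) - PI * cot (PI * x).
Proof.
  intros Hx. pose proof (reflection_defect_zero x Hx) as Hz.
  unfold reflection_defect, reflection_rhs in Hz. lra.
Qed.

Lemma prime_ge2 q : prime (Z.of_nat q) -> (2 <= q)%nat.
Proof. intros Hp. pose proof (prime_ge_2 _ Hp). lia. Qed.

Lemma prime_divisor_cases q g : prime (Z.of_nat q) -> Nat.divide g q -> g = 1%nat \/ g = q.
Proof.
  intros Hp [k Hk].
  assert (Hz : (Z.of_nat g | Z.of_nat q)%Z) by (exists (Z.of_nat k); rewrite Hk, Nat2Z.inj_mul; auto).
  destruct (prime_divisors _ Hp _ Hz) as [E|[E|[E|E]]]; lia.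
Qed.

Lemma coprime_mul_r b x y : Nat.gcd b x = 1%nat -> Nat.gcd b y = 1%nat -> Nat.gcd b (x * y) = 1%nat.
Proof.
  intros Hx Hy. set (g := Nat.gcd b (x * y)).
  assert (Hgb : Nat.divide g b) by apply Nat.gcd_divide_l.
  assert (Hgx : Nat.gcd g x = 1%nat).
  { apply Nat.divide_1_r. rewrite <- Hx. apply Nat.gcd_greatest; [|apply Nat.gcd_divide_r].
    eapply Nat.divide_trans; [apply Nat.gcd_divide_l|exact Hgb]. }
  assert (Hgy : Nat.divide g y) by (eapply Nat.gauss; [apply Nat.gcd_divide_r|exact Hgx]).
  apply Nat.divide_1_r. rewrite <- Hy. apply Nat.gcd_greatest; auto.
Qed.

Lemma coprime_prime_pow q b m : prime (Z.of_nat q) -> ~ Nat.divide q b -> Nat.gcd b (q ^ m) = 1%nat.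
Proof.
  intros Hp Hndiv.
  assert (Hq : Nat.gcd b q = 1%nat).
  { destruct (prime_divisor_cases q (Nat.gcd b q) Hp (Nat.gcd_divide_r b q)) as [E|E]; auto.
    exfalso; apply Hndiv. rewrite <- E. apply Nat.gcd_divide_l. }
  induction m; simpl; [apply Nat.divide_1_r, Nat.gcd_divide_r|apply coprime_mul_r; auto].
Qed.

Lemma pow_ge1 q t : (1 <= q)%nat -> (1 <= q ^ t)%nat.
Proof. intros Hq. induction t; simpl; nia. Qed.

Lemma factor_out_prime q a : (2 <= q)%nat -> (1 <= a)%nat ->
  exists t b, a = (q ^ t * b)%nat /\ ~ Nat.divide q b.
Proof.
  intros Hq. induction a as [a IH] using (well_founded_induction lt_wf). intros Ha.
  destruct (Nat.eq_dec (a mod q) 0) as [Hmod|Hmod].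
  - destruct (proj1 (Nat.Lcm0.mod_divide a q) Hmod) as [k Hk].
    destruct (IH k ltac:(nia) ltac:(nia)) as [t [b [E Hb]]].
    exists (S t), b. split; auto. rewrite Hk, E. simpl. ring.
  - exists 0%nat, a. simpl. split; [lia|].
    intros Hdiv. apply Hmod. apply Nat.Lcm0.mod_divide; auto.
Qed.

Lemma odd_prime_pow_odd q m : prime (Z.of_nat q) -> q <> 2%nat -> Nat.odd (q ^ m) = true.
Proof.
  intros Hp H2.
  assert (Hodd : Nat.odd q = true).
  { rewrite <- Nat.negb_even. destruct (Nat.even q) eqn:E; auto. exfalso.
    apply Nat.even_spec in E. destruct E as [k Hk].
    destruct (prime_divisor_cases q 2 Hp) as [E|E]; [exists k; lia|lia|lia]. }
  induction m; auto. simpl. rewrite Nat.odd_mul, Hodd, IHm. reflexivity.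
Qed.

(* The residues 1 <= a < Q/2 prime to Q; a -> Q - a shows there are at most
   totient Q / 2 of them. *)
Definition small_units (Q : nat) : list nat :=
  filter (fun a => Nat.eqb (Nat.gcd a Q) 1 && Nat.ltb (2 * a) Q) (seq 1 Q).

Lemma gcd_complement a Q : (a <= Q)%nat -> Nat.gcd (Q - a) Q = Nat.gcd a Q.
Proof.
  intros Ha. rewrite <- Nat.gcd_sub_diag_r by lia.
  replace (Q - (Q - a))%nat with a by lia. rewrite Nat.gcd_comm, Nat.gcd_sub_diag_r by lia.
  reflexivity.
Qed.

Lemma length_filter_disjoint {A} (P g h : A -> bool) (l : list A) :
  (forall a, g a = true -> h a = true -> False) ->
  (length (filter (fun a => P a && g a) l) + length (filter (fun a => P a && h a) l)
   <= length (filter P l))%nat.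
Proof.
  intros Hd. induction l as [|a l IH]; simpl; auto.
  destruct (P a), (g a) eqn:Ga, (h a) eqn:Ha; simpl; try (exfalso; eapply Hd; eauto; fail); lia.
Qed.

Lemma small_units_count Q : (2 * length (small_units Q) <= totient Q)%nat.
Proof.
  unfold small_units, totient.
  set (unit := fun a => Nat.eqb (Nat.gcd a Q) 1).
  set (large := fun a => Nat.ltb Q (2 * a)).
  pose proof (length_filter_disjoint unit (fun a => Nat.ltb (2 * a) Q) large (seq 1 Q)) as Hsplit.
  assert (Hlarge : (length (filter (fun a => unit a && Nat.ltb (2 * a) Q) (seq 1 Q)) <=
                    length (filter (fun a => unit a && large a) (seq 1 Q)))%nat).
  { rewrite <- (length_map (fun a => Q - a)%nat).
    apply NoDup_incl_length.
    - apply NoDup_map_NoDup_ForallPairs; [|apply NoDup_filter, seq_NoDup].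
      intros x y Hx Hy E. apply filter_In in Hx as [Hx _]. apply filter_In in Hy as [Hy _].
      apply in_seq in Hx; apply in_seq in Hy. lia.
    - intros b Hb. apply in_map_iff in Hb. destruct Hb as [a [<- Ha]].
      apply filter_In in Ha as [Ha Hc]. apply in_seq in Ha.
      apply andb_true_iff in Hc as [Hunit Hsmall]. apply Nat.ltb_lt in Hsmall.
      apply filter_In. split; [apply in_seq; lia|].
      apply andb_true_iff. split.
      + unfold unit in *. rewrite gcd_complement by lia. auto.
      + unfold large. apply Nat.ltb_lt. lia. }
  assert (Hdisj : forall a, Nat.ltb (2 * a) Q = true -> large a = true -> False).
  { intros a A B. unfold large in B. apply Nat.ltb_lt in A. apply Nat.ltb_lt in B. lia. }
  specialize (Hsplit Hdisj). unfold unit, large in *. lia.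
Qed.

Definition base_family : list R := 1 :: PI :: ln 2 :: nil.

Definition sym_value (Q a : nat) : R := H (INR a / INR Q) + H (INR (Q - a) / INR Q).

Definition prime_block (q m : nat) : list R := map (sym_value (q ^ m)) (small_units (q ^ m)).

Definition local_family (q m : nat) : list R := base_family ++ prime_block q m.

Lemma in_local_1 q m : In 1 (local_family q m).
Proof. simpl; auto. Qed.
Lemma in_local_PI q m : In PI (local_family q m).
Proof. simpl; auto. Qed.
Lemma in_local_ln2 q m : In (ln 2) (local_family q m).
Proof. simpl; auto. Qed.

Lemma nat_frac_in_unit_interval b Q : (0 < b < Q)%nat -> 0 < INR b / INR Q < 1.
Proof.
  intros Hb. assert (0 < INR b) by (apply lt_0_INR; lia).
  assert (INR b < INR Q) by (apply lt_INR; lia).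
  split; [apply Rdiv_lt_0_compat; lra|]. apply Rmult_lt_reg_r with (INR Q); [lra|].
  unfold Rdiv. rewrite Rmult_assoc, Rinv_l by lra. lra.
Qed.

(* By the reflection formula, the antisymmetric part H(x) - H(1-x) at a
   rational point x lies in the span of 1 and pi. *)
Lemma H_antisym_span Y b Q : In 1 Y -> In PI Y -> (0 < b < Q)%nat ->
  span Y (H (INR b / INR Q) - H (1 - INR b / INR Q)).
Proof.
  intros Hin1 HinPI Hb. rewrite H_reflection by (apply nat_frac_in_unit_interval; auto).
  replace (/ (INR b / INR Q) - / (1 - INR b / INR Q) - PI * cot (PI * (INR b / INR Q)))
    with ((/ (INR b / INR Q) - / (1 - INR b / INR Q)) * 1 + (- cot (PI * (INR b / INR Q))) * PI)
    by ring.
  apply span_add; apply span_scal; try (apply span_in; auto).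
  - apply alg_sub; apply alg_inv; [|apply alg_sub; [apply alg_IZR|]]; apply alg_nat_frac.
  - apply alg_opp, alg_cot_pi_frac. lia.
Qed.

Lemma INR_prime_ge2 q : prime (Z.of_nat q) -> 2 <= INR q.
Proof. intros Hp. apply (le_INR 2), prime_ge2, Hp. Qed.

Lemma INR_prime_pow_pos q k : prime (Z.of_nat q) -> 0 < INR (q ^ k).
Proof. intros Hp. apply lt_0_INR. pose proof (pow_ge1 q k). pose proof (prime_ge2 q Hp). lia. Qed.

Section PrimePower.

Variables q m : nat.
Hypothesis q_prime : prime (Z.of_nat q).
Hypothesis q_ne2 : q <> 2%nat.

(* H(b/Q) for a unit b modulo Q = q^m: half the sum of its symmetric part,
   which belongs to the block, and its antisymmetric part. *)
Lemma H_unit_span b : (1 <= b < q ^ m)%nat -> ~ Nat.divide q b ->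
  span (local_family q m) (H (INR b / INR (q ^ m))).
Proof.
  intros Hb Hndiv. set (Q := (q ^ m)%nat) in *.
  pose proof (INR_prime_pow_pos q m q_prime) as HQ. fold Q in HQ.
  assert (Hunit : Nat.gcd b Q = 1%nat) by (apply coprime_prime_pow; auto).
  assert (HQodd : Nat.odd Q = true) by (apply odd_prime_pow_odd; auto).
  apply Nat.odd_spec in HQodd. destruct HQodd as [d Hd].
  assert (Hsym : span (local_family q m) (sym_value Q b)).
  { apply span_in, in_or_app. right. unfold prime_block. fold Q.
    destruct (Nat.ltb_spec (2 * b) Q) as [Hsmall|Hlarge].
    - apply in_map, filter_In. split; [apply in_seq; lia|].
      apply andb_true_iff; split; [apply Nat.eqb_eq|apply Nat.ltb_lt]; auto.
    - replace (sym_value Q b) with (sym_value Q (Q - b))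
        by (unfold sym_value; replace (Q - (Q - b))%nat with b by lia; ring).
      apply in_map, filter_In. split; [apply in_seq; lia|].
      apply andb_true_iff; split; [apply Nat.eqb_eq|apply Nat.ltb_lt; lia].
      rewrite gcd_complement by lia. auto. }
  pose proof (H_antisym_span (local_family q m) b Q (in_local_1 q m) (in_local_PI q m)
                ltac:(lia)) as Hanti.
  unfold sym_value in Hsym.
  replace (INR (Q - b) / INR Q) with (1 - INR b / INR Q) in Hsym
    by (rewrite minus_INR by lia; field; lra).
  replace (H (INR b / INR Q)) with
    (/ 2 * (H (INR b / INR Q) + H (1 - INR b / INR Q)) + / 2 * (H (INR b / INR Q) - H (1 - INR b / INR Q)))
    by field.
  apply span_add; apply span_scal; auto; apply alg_inv, alg_IZR.
Qed.

(* Going down one level with the multiplication formula (N = q) costs one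
   ln q: for b prime to q, H(b/q^(m-d)) = d ln q modulo the span. *)
Lemma H_lower_level_span d : (d + 1 <= m)%nat ->
  forall b, (1 <= b < q ^ (m - d))%nat -> ~ Nat.divide q b ->
  span (local_family q m) (H (INR b / INR (q ^ (m - d))) - INR d * ln (INR q)).
Proof.
  pose proof (INR_prime_ge2 q q_prime) as Hq.
  induction d as [|d IH]; intros Hd b Hb Hndiv.
  { replace (m - 0)%nat with m in * by lia. simpl. rewrite Rmult_0_l, Rminus_0_r.
    apply H_unit_span; auto. }
  set (k := (m - S d)%nat) in *.
  replace (m - d)%nat with (S k) in IH by lia.
  set (s := INR b / INR (q ^ k)).
  assert (Hs : 0 <= s) by (apply Rle_mult_inv_pos; [apply pos_INR|apply INR_prime_pow_pos; auto]).
  (* the q points (s + j)/q are all units at the level above *)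
  assert (Hup : forall j, (j < q)%nat ->
            span (local_family q m) (H ((s + INR j) / INR q) - INR d * ln (INR q))).
  { intros j Hj.
    replace ((s + INR j) / INR q) with (INR (b + j * q ^ k) / INR (q ^ S k)).
    2:{ pose proof (INR_prime_pow_pos q k q_prime). unfold s.
        rewrite plus_INR, mult_INR, Nat.pow_succ_r', mult_INR. field. lra. }
    apply IH; [lia| simpl; nia |].
    intros Hdiv. apply Hndiv, (Nat.divide_add_cancel_r q (j * q ^ k) b); [|rewrite Nat.add_comm; auto].
    apply Nat.divide_mul_r. replace k with (S (k - 1)) by lia. apply Nat.divide_factor_l. }
  pose proof (span_sum _ q _ Hup) as Hsum.
  pose proof (prime_ge2 q q_prime) as Hq2.
  rewrite sum_minus, sum_const, H_multiplication in Hsum by (auto; lia).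
  apply span_cancel with (INR q); [apply alg_INR|lra|].
  replace (INR q * (H s - INR (S d) * ln (INR q))) with
    (INR q * H s + INR q * shifted_harmonic s (q - 1) - INR q * ln (INR q) - INR q * (INR d * ln (INR q))
     - INR q * shifted_harmonic s (q - 1)) by (rewrite S_INR; ring).
  apply span_sub; auto. apply span_alg; [apply in_local_1|].
  apply alg_mul; [apply alg_INR|]. unfold shifted_harmonic. apply alg_sum. intros i.
  apply alg_inv, alg_add; [apply alg_add; [apply alg_INR|apply alg_IZR]|apply alg_nat_frac].
Qed.

(* At level 1, summing the multiplication formula over all residues j/q
   isolates a nonzero multiple of ln q. *)
Lemma ln_prime_span : (1 <= m)%nat -> span (local_family q m) (ln (INR q)).
Proof.
  intros Hm. pose proof (INR_prime_ge2 q q_prime) as Hq. pose proof (prime_ge2 q q_prime) as Hq2.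
  pose proof (H_multiplication q 0 ltac:(lia) ltac:(lra)) as Hmult.
  replace q with (S (q - 1)) in Hmult at 1 by lia.
  rewrite sum_first, Rplus_0_l in Hmult. simpl INR in Hmult at 1.
  replace (0 / INR q) with 0 in Hmult by (field; lra). rewrite H_0, Rmult_0_r, Rplus_0_l in Hmult.
  assert (Hlevel1 : forall j, (j < q - 1)%nat ->
     span (local_family q m) (H ((0 + INR (S j)) / INR q) - INR (m - 1) * ln (INR q))).
  { intros j Hj.
    replace ((0 + INR (S j)) / INR q) with (INR (S j) / INR (q ^ (m - (m - 1)))).
    2:{ replace (m - (m - 1))%nat with 1%nat by lia. simpl. rewrite Nat.mul_1_r. field. lra. }
    apply H_lower_level_span; [lia|replace (m - (m - 1))%nat with 1%nat by lia; simpl; lia|].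
    intros Hdiv. apply Nat.divide_pos_le in Hdiv; lia. }
  pose proof (span_sum _ (q - 1) _ Hlevel1) as Hsum.
  rewrite sum_minus, sum_const, Hmult, Rplus_0_l in Hsum.
  set (c := INR q + INR (q - 1) * INR (m - 1)).
  assert (Hc : 0 < c) by (unfold c; pose proof (pos_INR (q - 1)); pose proof (pos_INR (m - 1)); nra).
  apply span_cancel with (- c); [unfold c; apply alg_opp, alg_add; [|apply alg_mul]; apply alg_INR|lra|].
  replace (- c * ln (INR q)) with
    (INR q * shifted_harmonic 0 (q - 1) - INR q * ln (INR q) - INR (q - 1) * (INR (m - 1) * ln (INR q))
     - INR q * shifted_harmonic 0 (q - 1)) by (unfold c; ring).
  apply span_sub; auto. apply span_alg; [apply in_local_1|].
  apply alg_mul; [apply alg_INR|]. unfold shifted_harmonic. apply alg_sum. intros i.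
  apply alg_inv, alg_add; [apply alg_add; [apply alg_INR|]|]; apply alg_IZR.
Qed.

(* Every H(a/q^m) with 0 <= a <= q^m lies in the span: write a = q^t b. *)
Lemma H_level_span a : (a <= q ^ m)%nat -> span (local_family q m) (H (INR a / INR (q ^ m))).
Proof.
  intros Ha. pose proof (prime_ge2 q q_prime) as Hq2. pose proof (INR_prime_pow_pos q m q_prime) as HQ.
  destruct (Nat.eq_dec a 0) as [->|Ha0].
  { replace (INR 0 / INR (q ^ m)) with 0 by (simpl; field; lra). rewrite H_0. apply span_zero. }
  destruct (Nat.eq_dec a (q ^ m)) as [->|HaQ].
  { replace (INR (q ^ m) / INR (q ^ m)) with 1 by (field; lra). rewrite H_1. apply span_in, in_local_1. }
  destruct (factor_out_prime q a Hq2 ltac:(lia)) as [t [b [Eab Hb]]].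
  assert (Ht : (t < m)%nat).
  { destruct (Nat.lt_ge_cases t m) as [|Hge]; auto. exfalso.
    assert (Hle : (q ^ m <= q ^ t)%nat) by (apply Nat.pow_le_mono_r; lia).
    destruct b; [lia|]. nia. }
  assert (Em : (q ^ m = q ^ t * q ^ (m - t))%nat) by (rewrite <- Nat.pow_add_r; f_equal; lia).
  pose proof (INR_prime_pow_pos q t q_prime) as Hqt. pose proof (INR_prime_pow_pos q (m - t) q_prime) as Hqmt.
  replace (INR a / INR (q ^ m)) with (INR b / INR (q ^ (m - t)))
    by (rewrite Eab, Em, !mult_INR; field; split; lra).
  replace (H (INR b / INR (q ^ (m - t)))) with
    ((H (INR b / INR (q ^ (m - t))) - INR t * ln (INR q)) + INR t * ln (INR q)) by ring.
  apply span_add.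
  - apply H_lower_level_span; [lia| |auto].
    destruct b; [lia|]. split; [lia|]. pose proof (pow_ge1 q t). nia.
  - apply span_scal; [apply alg_INR|apply ln_prime_span; lia].
Qed.

End PrimePower.

Lemma span_duplication_sum Y s : In 1 Y -> In (ln 2) Y -> alg s -> 0 <= s -> span Y (H s) ->
  span Y (H (s / 2) + H ((s + 1) / 2)).
Proof.
  intros Hin1 Hin2 Halg Hs HHs. rewrite H_duplication by auto.
  apply span_sub; [apply span_add|].
  - apply span_scal; auto. apply alg_IZR.
  - apply span_alg; auto. apply alg_div; [apply alg_IZR|apply alg_add; [auto|apply alg_IZR]].
  - apply span_scal; [apply alg_IZR|apply span_in; auto].
Qed.

(* Level 2 q^m: even numerators reduce to level q^m; an odd numerator a
   pairs a/(2Q) with another point of denominator Q through duplication at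
   s = a/Q (if a < Q) or s = (a-Q)/Q (if a > Q). *)
Lemma H_double_level_span q m a : prime (Z.of_nat q) -> q <> 2%nat -> (1 <= a <= 2 * q ^ m - 1)%nat ->
  span (local_family q m) (H (INR a / INR (2 ^ 1 * q ^ m))).
Proof.
  intros Hp H2 Ha. set (Q := (q ^ m)%nat) in *.
  pose proof (INR_prime_pow_pos q m Hp) as HQ. fold Q in HQ.
  assert (HQodd : Nat.odd Q = true) by (apply odd_prime_pow_odd; auto).
  apply Nat.odd_spec in HQodd. destruct HQodd as [d Hd].
  assert (HQd : INR Q = 2 * INR d + 1) by (rewrite Hd, plus_INR, mult_INR; simpl; ring).
  replace (INR (2 ^ 1 * Q)) with (2 * INR Q) by (rewrite mult_INR; simpl; ring).
  assert (Hlevel : forall b, (b <= Q)%nat -> span (local_family q m) (H (INR b / INR Q)))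
    by (intros; apply H_level_span; auto).
  assert (Hdup : forall b, (b <= Q)%nat ->
            span (local_family q m) (H ((INR b / INR Q) / 2) + H ((INR b / INR Q + 1) / 2))).
  { intros b Hb. apply span_duplication_sum; auto using in_local_1, in_local_ln2, alg_nat_frac.
    apply Rle_mult_inv_pos; [apply pos_INR|auto]. }
  destruct (Nat.Even_or_Odd a) as [[c Hc]|[c Hc]].
  - replace (INR a / (2 * INR Q)) with (INR c / INR Q) by (rewrite Hc, mult_INR; simpl; field; lra).
    apply Hlevel. lia.
  - destruct (Nat.lt_ge_cases a Q) as [HaQ|HaQ].
    + replace (INR a / (2 * INR Q)) with ((INR a / INR Q) / 2) by (field; lra).
      replace (H ((INR a / INR Q) / 2)) with
        ((H ((INR a / INR Q) / 2) + H ((INR a / INR Q + 1) / 2)) - H (INR (c + d + 1) / INR Q)).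
      2:{ replace ((INR a / INR Q + 1) / 2) with (INR (c + d + 1) / INR Q); [ring|].
          rewrite Hc, !plus_INR, mult_INR, HQd. simpl. field. pose proof (pos_INR d). lra. }
      apply span_sub; apply Hdup || apply Hlevel; lia.
    + replace (INR a / (2 * INR Q)) with ((INR (a - Q) / INR Q + 1) / 2)
        by (rewrite minus_INR by lia; field; lra).
      replace (H ((INR (a - Q) / INR Q + 1) / 2)) with
        ((H ((INR (a - Q) / INR Q) / 2) + H ((INR (a - Q) / INR Q + 1) / 2)) - H (INR (c - d) / INR Q)).
      2:{ replace ((INR (a - Q) / INR Q) / 2) with (INR (c - d) / INR Q); [ring|].
          rewrite !minus_INR by lia. rewrite Hc, HQd, plus_INR, mult_INR. simpl. field. pose proof (pos_INR d). lra. }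
      apply span_sub; apply Hdup || apply Hlevel; lia.
Qed.

Lemma H_member_span q m e a : prime (Z.of_nat q) -> q <> 2%nat -> (e <= 1)%nat ->
  (1 <= a <= 2 ^ e * q ^ m - 1)%nat ->
  span (local_family q m) (H (INR a / INR (2 ^ e * q ^ m))).
Proof.
  intros Hp H2 He Ha. destruct e as [|[|e]]; [|apply H_double_level_span; auto; simpl in Ha; lia|lia].
  replace (2 ^ 0 * q ^ m)%nat with (q ^ m)%nat in * by (simpl; lia).
  apply H_level_span; auto. lia.
Qed.

Definition global_family (q m : nat -> nat) (n : nat) : list R :=
  base_family ++ flat_map (fun i => prime_block (q i) (m i)) (seq 0 n).

Lemma local_incl_global q m n i : (i < n)%nat -> incl (local_family (q i) (m i)) (global_family q m n).
Proof.
  intros Hi y Hy. apply in_app_or in Hy. apply in_or_app.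
  destruct Hy as [Hy|Hy]; [left; auto|right].
  apply in_flat_map. exists i. split; auto. apply in_seq. lia.
Qed.

Lemma global_family_length q m n :
  INR (length (global_family q m n)) <= sumR_upto n (fun i => INR (totient (q i ^ m i)) / 2) + 3.
Proof.
  unfold global_family. rewrite length_app, plus_INR. simpl length.
  replace (INR 3) with 3 by (simpl; ring). rewrite Rplus_comm. apply Rplus_le_compat_r.
  induction n; [simpl; lra|].
  rewrite seq_S, flat_map_app, length_app, plus_INR, sum_S. simpl flat_map.
  rewrite app_nil_r. apply Rplus_le_compat; auto.
  unfold prime_block. rewrite length_map.
  pose proof (le_INR _ _ (small_units_count (q n ^ m n))) as Hcount.
  rewrite mult_INR in Hcount. simpl INR in Hcount. lra.
Qed.

Theorem theorem3p10 (n : nat) (q m e : nat -> nat)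
  (hq_prime : forall i, (i < n)%nat -> prime (Z.of_nat (q i)))
  (hq_odd : forall i, (i < n)%nat -> q i <> 2%nat)
  (hq_ne3 : forall i, (i < n)%nat -> q i <> 3%nat)
  (hq_inj : forall i j, (i < n)%nat -> (j < n)%nat -> q i = q j -> i = j)
  (he : forall i, (i < n)%nat -> (e i <= 1)%nat)
  (xs : list R)
  (hnodup : NoDup xs)
  (hmem : forall x, In x xs ->
     x = H 1 \/
     exists i a, (i < n)%nat /\ (1 <= a)%nat /\ (a <= 2 ^ e i * q i ^ m i - 1)%nat /\
                 x = H (INR a / INR (2 ^ e i * q i ^ m i)))
  (hind : alg_lin_indep xs) :
  INR (length xs) <= sumR_upto n (fun i => INR (totient (q i ^ m i)) / 2) + 3.
Proof.
  assert (Hspan : forall x, In x xs -> span (global_family q m n) x).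
  { intros x Hx. destruct (hmem x Hx) as [->|[i [a [Hi [Ha1 [Ha2 ->]]]]]].
    - rewrite H_1. apply span_in. simpl. auto.
    - apply span_incl with (local_family (q i) (m i)); [apply local_incl_global; auto|].
      apply H_member_span; auto. }
  pose proof (le_INR _ _ (alg_lin_indep_length_le _ xs Hspan hind)) as Hle.
  pose proof (global_family_length q m n). lra.
Qed.
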